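(* For a monoid $S$ the following are equivalent: (1) $S$ has the fem-property; (2) every $2$-generated $S$-act embeds into a monogenic $S$-act; (3) the free $S$-act $F_S(X)$ with $|X|=2$ embeds into a monogenic $S$-act; (4) $F_S(X)$ with $|X|=2$ embeds into $S$ (regarded as a right $S$-act); (5) there exist left cancellable elements $s,t\in S$ with $sS\cap tS=\emptyset$.
   Context: Let $S$ be a monoid. A (right) $S$-act is a set $A$ with a map $A\times S\to A$, $(a,s)\mapsto as$, such that $a1=a$ and $a(st)=(as)t$; $S$ is a right $S$-act under right multiplication. An $S$-act is monogenic if it equals $cS$ for some element $c$, $2$-generated if it equals $aS\cup bS$ for some $a,b$, and finitely generated if it is a union of finitely many monogenic subacts. An embedding is an injective $S$-morphism. For a set $X$, $F_S(X)$ is the free $S$-act on $X$: elements $xs$ ($x\in X$, $s\in S$) with $xs=yt$ iff $x=y$ and $s=t$, and action $(xs)t=x(st)$. $S$ has the fem-property if every finitely generated $S$-act embeds into a monogenic $S$-act. An element $s$ is left cancellable if $su=sv$ implies $u=v$. *)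

From Stdlib Require Import List.
Import ListNotations.

Definition is_monoid {S : Type} (mul : S -> S -> S) (e : S) : Prop :=
  (forall s t u, mul s (mul t u) = mul (mul s t) u) /\
  (forall s, mul e s = s) /\ (forall s, mul s e = s).

Definition is_act {S : Type} (mul : S -> S -> S) (e : S)
  {A : Type} (act : A -> S -> A) : Prop :=
  (forall a, act a e = a) /\
  (forall a s t, act a (mul s t) = act (act a s) t).

Definition is_morphism {S A B : Type} (actA : A -> S -> A) (actB : B -> S -> B)
  (f : A -> B) : Prop :=
  forall a s, f (actA a s) = actB (f a) s.

Definition is_embedding {S A B : Type} (actA : A -> S -> A) (actB : B -> S -> B)
  (f : A -> B) : Prop :=
  is_morphism actA actB f /\ (forall a a', f a = f a' -> a = a').

Definition monogenic {S A : Type} (act : A -> S -> A) : Prop :=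
  exists c : A, forall a : A, exists s : S, a = act c s.

Definition two_generated {S A : Type} (act : A -> S -> A) : Prop :=
  exists a b : A, forall x : A, exists s : S, x = act a s \/ x = act b s.

Definition finitely_generated {S A : Type} (act : A -> S -> A) : Prop :=
  exists l : list A, forall x : A, exists c, In c l /\ exists s : S, x = act c s.

Definition embeds_into_monogenic {S : Type} (mul : S -> S -> S) (e : S)
  {A : Type} (actA : A -> S -> A) : Prop :=
  exists (B : Type) (actB : B -> S -> B),
    is_act mul e actB /\ monogenic actB /\
    exists f : A -> B, is_embedding actA actB f.

Definition fem_property {S : Type} (mul : S -> S -> S) (e : S) : Prop :=
  forall (A : Type) (act : A -> S -> A),
    is_act mul e act -> finitely_generated act -> embeds_into_monogenic mul e act.

Definition free_act {S : Type} (mul : S -> S -> S) (X : Type)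
  (p : X * S) (t : S) : X * S := (fst p, mul (snd p) t).

Definition regular_act {S : Type} (mul : S -> S -> S) : S -> S -> S := mul.

Definition left_cancellable {S : Type} (mul : S -> S -> S) (s : S) : Prop :=
  forall u v, mul s u = mul s v -> u = v.

(* If s and t are left cancellable with sS and tS disjoint, the elements
   t^i s x (i in N, x in S) are pairwise distinct and never equal 1, so S contains
   countably many disjoint copies t^i sS of the regular act.  Any act generated by
   c_0, c_1, ... is glued onto S by identifying t^i s x with c_i x; the result is
   generated by 1.  Conversely, if F_S({1,2}) embeds into cS, the images of the two
   free generators are c s and c t, and injectivity of the embedding says exactly
   that s and t are left cancellable with sS and tS disjoint. *)
From Stdlib Require Import List Classical ClassicalEpsilon ProofIrrelevance.

Section Monoid.
Variables (M : Type) (mul : M -> M -> M) (e : M).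
Hypothesis mulA : forall s t u, mul s (mul t u) = mul (mul s t) u.
Hypothesis mul1s : forall s, mul e s = s.
Hypothesis muls1 : forall s, mul s e = s.

Definition disjoint_cancellable_pair : Prop :=
  exists s t : M, left_cancellable mul s /\ left_cancellable mul t /\
    (forall u v : M, mul s u <> mul t v).

Lemma regular_act_is_act : is_act mul e (regular_act mul).
Proof. split; [exact muls1 | exact mulA]. Qed.

Lemma regular_act_monogenic : monogenic (regular_act mul).
Proof. exists e; intros a; exists a; symmetry; apply mul1s. Qed.

Lemma free_act_is_act (X : Type) : is_act mul e (free_act mul X).
Proof.
  split.
  - intros [x a]; unfold free_act; simpl; rewrite muls1; reflexivity.
  - intros [x a] u v; unfold free_act; simpl; rewrite mulA; reflexivity.
Qed.

Lemma free_act_bool_two_generated : two_generated (free_act mul bool).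
Proof.
  exists (true, e), (false, e); intros [[|] x]; exists x;
    unfold free_act; simpl; rewrite mul1s; auto.
Qed.

Lemma two_generated_finitely_generated (A : Type) (act : A -> M -> A) :
  two_generated act -> finitely_generated act.
Proof.
  intros [a [b Hab]]; exists (a :: b :: nil); intros x.
  destruct (Hab x) as [u [E | E]].
  - exists a; split; [left; reflexivity | exists u; exact E].
  - exists b; split; [right; left; reflexivity | exists u; exact E].
Qed.

Lemma embeds_into_regular_embeds_into_monogenic (A : Type) (act : A -> M -> A) :
  (exists f : A -> M, is_embedding act (regular_act mul) f) ->
  embeds_into_monogenic mul e act.
Proof.
  intros Hf; exists M, (regular_act mul).
  split; [exact regular_act_is_act | split; [exact regular_act_monogenic | exact Hf]].
Qed.

Lemma empty_embeds_into_monogenic (A : Type) (act : A -> M -> A) :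
  (A -> False) -> embeds_into_monogenic mul e act.
Proof.
  intros HA; apply embeds_into_regular_embeds_into_monogenic.
  exists (fun a => False_rect M (HA a)); split; intros a; destruct (HA a).
Qed.

Lemma free_act_embedding_disjoint_cancellable_pair (B : Type) (actB : B -> M -> B) :
  is_act mul e actB -> monogenic actB ->
  (exists f, is_embedding (free_act mul bool) actB f) -> disjoint_cancellable_pair.
Proof.
  intros [_ actBA] [c Hc] [f [fM f_inj]].
  destruct (Hc (f (true, e))) as [s Es]; destruct (Hc (f (false, e))) as [t Et].
  set (g := fun b : bool => if b then s else t).
  assert (f_free : forall b x, f (b, x) = actB c (mul (g b) x)).
  { intros b x; rewrite actBA.
    replace (b, x) with (free_act mul bool (b, e) x)
      by (unfold free_act; simpl; rewrite mul1s; reflexivity).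
    rewrite fM; destruct b; [rewrite Es | rewrite Et]; reflexivity. }
  assert (f_eq : forall b b' x y, mul (g b) x = mul (g b') y -> (b, x) = (b', y)).
  { intros b b' x y E; apply f_inj; rewrite !f_free, E; reflexivity. }
  exists s, t; split; [|split].
  - intros u v E; pose proof (f_eq true true u v E); congruence.
  - intros u v E; pose proof (f_eq false false u v E); congruence.
  - intros u v E; pose proof (f_eq true false u v E); congruence.
Qed.

Lemma disjoint_cancellable_pair_free_act_embedding :
  disjoint_cancellable_pair ->
  exists f : bool * M -> M, is_embedding (free_act mul bool) (regular_act mul) f.
Proof.
  intros [s [t [Hs [Ht Hd]]]].
  exists (fun p : bool * M => mul (if fst p then s else t) (snd p)); split.
  - intros [b x] y; unfold free_act, regular_act; simpl; apply mulA.
  - intros [[|] x] [[|] y]; simpl; intros E.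
    + rewrite (Hs _ _ E); reflexivity.
    + destruct (Hd _ _ E).
    + destruct (Hd _ _ (eq_sym E)).
    + rewrite (Ht _ _ E); reflexivity.
Qed.

Section Gluing.
Variables (s t : M).
Hypothesis s_cancel : left_cancellable mul s.
Hypothesis t_cancel : left_cancellable mul t.
Hypothesis s_t_disjoint : forall u v : M, mul s u <> mul t v.

Fixpoint tpow (i : nat) : M := match i with 0 => e | S i => mul t (tpow i) end.

Definition code (i : nat) (x : M) : M := mul (tpow i) (mul s x).

Lemma code_S i x : code (S i) x = mul t (code i x).
Proof. unfold code; simpl; symmetry; apply mulA. Qed.

Lemma code_0 x : code 0 x = mul s x.
Proof. apply mul1s. Qed.

Lemma mul_code i x y : mul (code i x) y = code i (mul x y).
Proof. unfold code; rewrite <- !mulA; reflexivity. Qed.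

Lemma code_inj i j x y : code i x = code j y -> i = j /\ x = y.
Proof.
  revert j; induction i as [|i IH]; intros [|j] E.
  - rewrite !code_0 in E; split; [reflexivity | exact (s_cancel _ _ E)].
  - rewrite code_0, code_S in E; destruct (s_t_disjoint _ _ E).
  - rewrite code_0, code_S in E; destruct (s_t_disjoint _ _ (eq_sym E)).
  - rewrite !code_S in E; destruct (IH _ (t_cancel _ _ E)) as [-> ->]; split; reflexivity.
Qed.

Lemma unit_neq_code i y : e <> code i y.
Proof.
  (* 1 = s y gives t = s (y t), and 1 = t z gives s = t (z s). *)
  intros E; destruct i as [|i].
  - rewrite code_0 in E.
    apply (s_t_disjoint (mul y t) e); rewrite mulA, <- E, mul1s, muls1; reflexivity.
  - rewrite code_S in E.
    apply (s_t_disjoint e (mul (code i y) s)); rewrite muls1, mulA, <- E, mul1s; reflexivity.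
Qed.

Variables (A : Type) (act : A -> M -> A).
Hypothesis act_is_act : is_act mul e act.
Variable c : nat -> A.
Hypothesis c_generates : forall a, exists i x, a = act (c i) x.

Definition is_code (w : M) : Prop := exists p : nat * M, w = code (fst p) (snd p).

Definition glued : Type := (A + {w : M | ~ is_code w})%type.

Definition glue (w : M) : glued :=
  match excluded_middle_informative (is_code w) with
  | left H => let p := proj1_sig (constructive_indefinite_description _ H) in
              inl (act (c (fst p)) (snd p))
  | right H => inr (exist _ w H)
  end.

Lemma glue_code i x : glue (code i x) = inl (act (c i) x).
Proof.
  unfold glue; destruct excluded_middle_informative as [H | H].
  - destruct constructive_indefinite_description as [[i' x'] E]; simpl in *.
    destruct (code_inj _ _ _ _ E) as [-> ->]; reflexivity.
  - destruct H; exists (i, x); reflexivity.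
Qed.

Lemma glue_not_code w (H : ~ is_code w) : glue w = inr (exist _ w H).
Proof.
  unfold glue; destruct excluded_middle_informative as [H' | H'].
  - destruct (H H').
  - do 2 f_equal; apply proof_irrelevance.
Qed.

Definition glued_act (b : glued) (x : M) : glued :=
  match b with
  | inl a => inl (act a x)
  | inr w => glue (mul (proj1_sig w) x)
  end.

Lemma glued_act_glue w x : glued_act (glue w) x = glue (mul w x).
Proof.
  destruct (classic (is_code w)) as [[[i y] E] | H].
  - simpl in E; subst w; rewrite glue_code, mul_code, glue_code; simpl.
    rewrite (proj2 act_is_act); reflexivity.
  - rewrite (glue_not_code w H); reflexivity.
Qed.

Lemma glued_act_is_act : is_act mul e glued_act.
Proof.
  destruct act_is_act as [act1 actA]; split.
  - intros [a | [w Hw]]; simpl.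
    + rewrite act1; reflexivity.
    + rewrite muls1; apply glue_not_code.
  - intros [a | [w Hw]] x y; simpl.
    + rewrite actA; reflexivity.
    + rewrite glued_act_glue, mulA; reflexivity.
Qed.

Lemma unit_not_code : ~ is_code e.
Proof. intros [[i y] E]; exact (unit_neq_code _ _ E). Qed.

Lemma glued_act_monogenic : monogenic glued_act.
Proof.
  exists (inr (exist _ e unit_not_code)); intros [a | [w Hw]]; simpl.
  - destruct (c_generates a) as [i [x ->]].
    exists (code i x); rewrite mul1s, glue_code; reflexivity.
  - exists w; rewrite mul1s, (glue_not_code w Hw); reflexivity.
Qed.

Lemma countably_generated_embeds_into_monogenic : embeds_into_monogenic mul e act.
Proof.
  exists glued, glued_act; split; [exact glued_act_is_act|].
  split; [exact glued_act_monogenic|].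
  exists inl; split.
  - intros a x; reflexivity.
  - intros a a' E; injection E; auto.
Qed.

End Gluing.

Lemma disjoint_cancellable_pair_fem : disjoint_cancellable_pair -> fem_property mul e.
Proof.
  intros [s [t [Hs [Ht Hd]]]] A act Hact [[|d l] Hl].
  - apply empty_embeds_into_monogenic; intros a; destruct (Hl a) as [? [[] _]].
  - apply (countably_generated_embeds_into_monogenic s t Hs Ht Hd A act Hact
             (fun i => nth i (d :: l) d)).
    intros a; destruct (Hl a) as [g [Hg [x E]]].
    destruct (In_nth _ _ d Hg) as [i [_ Ei]]; exists i, x; rewrite Ei; exact E.
Qed.

End Monoid.

Theorem mainTheorem4 (S : Type) (mul : S -> S -> S) (e : S)
  (HS : is_monoid mul e) :
  (fem_property mul e <->
   (forall (A : Type) (act : A -> S -> A),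
      is_act mul e act -> two_generated act -> embeds_into_monogenic mul e act)) /\
  (fem_property mul e <-> embeds_into_monogenic mul e (free_act mul bool)) /\
  (fem_property mul e <->
   exists f : bool * S -> S, is_embedding (free_act mul bool) (regular_act mul) f) /\
  (fem_property mul e <->
   exists s t : S, left_cancellable mul s /\ left_cancellable mul t /\
     (forall u v : S, mul s u <> mul t v)).
Proof.
  destruct HS as [mulA [mul1s muls1]].
  assert (fem_two_generated : fem_property mul e ->
    forall (A : Type) (act : A -> S -> A),
      is_act mul e act -> two_generated act -> embeds_into_monogenic mul e act).
  { intros Hfem A act Hact H2; apply Hfem;
      [exact Hact | exact (two_generated_finitely_generated _ _ _ H2)]. }
  assert (two_generated_free : (forall (A : Type) (act : A -> S -> A),
      is_act mul e act -> two_generated act -> embeds_into_monogenic mul e act) ->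
    embeds_into_monogenic mul e (free_act mul bool)).
  { intros H; apply H; [exact (free_act_is_act _ _ _ mulA muls1 bool)
                       | exact (free_act_bool_two_generated _ _ _ mul1s)]. }
  assert (free_pair : embeds_into_monogenic mul e (free_act mul bool) ->
    disjoint_cancellable_pair S mul).
  { intros [B [actB [HB [Hmono Hemb]]]];
      exact (free_act_embedding_disjoint_cancellable_pair _ _ _ mul1s _ _ HB Hmono Hemb). }
  pose proof (disjoint_cancellable_pair_fem _ _ _ mulA mul1s muls1) as pair_fem.
  pose proof (disjoint_cancellable_pair_free_act_embedding _ _ mulA) as pair_regular.
  pose proof (embeds_into_regular_embeds_into_monogenic _ _ _ mulA mul1s muls1 _
                (free_act mul bool)) as regular_free.
  unfold disjoint_cancellable_pair in *.
  repeat split; intros H; auto.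
Qed.
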